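(* (Equivalence of CPL natural deduction and sequent calculus.) Fix a set $W$ of worlds with a converse well-founded accessibility relation $\prec$. For every context $\Gamma$, proposition $A$ and world $w$: $\Gamma \vdash_{\mathbf{CPL}} A[w]$ if and only if $\Gamma \Rightarrow A[w]$.
   Context: Fix a set $W$ of worlds and a binary accessibility relation $\prec$ on $W$ that is converse well-founded: there is no infinite chain $w_0 \prec w_1 \prec \cdots$. Propositions: $A,B,C ::= Q \mid \bot \mid A \supset B \mid \Diamond A \mid \Box A$, $Q$ atomic. A context $\Gamma$ is a finite collection of judgments $A[w]$ ($w \in W$). Both judgments below are defined one world at a time (provability at $w$ after provability at all worlds reachable from $w$ by one or more $\prec$-steps; well-defined by converse well-foundedness), each as the least relation closed under its rules; premises may be meta-level universal quantifications and implications. Natural deduction $\Gamma \vdash_{\mathbf{CPL}} A[w]$: (hyp) $\Gamma, A[w] \vdash A[w]$. ($\bot E$) $\Gamma \vdash \bot[w]$ implies $\Gamma \vdash C[w]$. ($\supset I$) $\Gamma, A[w] \vdash B[w]$ implies $\Gamma \vdash A \supset B[w]$. ($\supset E$) $\Gamma \vdash A \supset B[w]$ and $\Gamma \vdash A[w]$ imply $\Gamma \vdash B[w]$. ($\Diamond I$) $w \prec w'$ and $\Gamma \vdash A[w']$ imply $\Gamma \vdash \Diamond A[w]$. ($\Box I$) if $\Gamma \vdash A[w']$ for all $w'$ with $w \prec w'$ then $\Gamma \vdash \Box A[w]$. ($\Diamond E$) if $\Gamma \vdash \Diamond A[w]$ and for all $w'$ with $w\prec w'$, $\Gamma \vdash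 A[w']$ implies $\Gamma \vdash C[w]$, then $\Gamma \vdash C[w]$. ($\Box E$) if $\Gamma \vdash \Box A[w]$ and ($\Gamma \vdash A[w']$ for all $w'$ with $w \prec w'$) implies $\Gamma \vdash C[w]$, then $\Gamma \vdash C[w]$. Sequent calculus $\Gamma \Rightarrow A[w]$: (init) $\Gamma, Q[w] \Rightarrow Q[w]$ for $Q$ atomic. ($\bot L$) $\bot[w]\in\Gamma$ implies $\Gamma \Rightarrow C[w]$. ($\supset R$) $\Gamma, A[w] \Rightarrow B[w]$ implies $\Gamma \Rightarrow A \supset B[w]$. ($\supset L$) $A\supset B[w] \in \Gamma$, $\Gamma \Rightarrow A[w]$ and $\Gamma, B[w] \Rightarrow C[w]$ imply $\Gamma \Rightarrow C[w]$. ($\Diamond R$) $w\prec w'$ and $\Gamma \Rightarrow A[w']$ imply $\Gamma \Rightarrow \Diamond A[w]$. ($\Box R$) if $\Gamma \Rightarrow A[w']$ for all $w'$ with $w \prec w'$ then $\Gamma \Rightarrow \Box A[w]$. ($\Diamond L$) if $\Diamond A[w]\in\Gamma$ and for all $w'$ with $w \prec w'$, $\Gamma \Rightarrow A[w']$ implies $\Gamma \Rightarrow C[w]$, then $\Gamma \Rightarrow C[w]$. ($\Box L$) if $\Box A[w]\in\Gamma$ and ($\Gamma \Rightarrow A[w']$ for all $w'$ with $w\prec w'$) implies $\Gamma \Rightarrow C[w]$, then $\Gamma \Rightarrow C[w]$. *)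

From Stdlib Require Import List.
Import ListNotations.
Set Implicit Arguments.

Inductive prop (Atom : Type) : Type :=
| Atm : Atom -> prop Atom
| Bot : prop Atom
| Imp : prop Atom -> prop Atom -> prop Atom
| Dia : prop Atom -> prop Atom
| Box : prop Atom -> prop Atom.
Arguments Bot {Atom}.

Definition ctx (Atom W : Type) : Type := list (prop Atom * W).

Section Calculi.
Variables (Atom W : Type) (R : W -> W -> Prop).

Definition Rc (y x : W) : Prop := R x y.

(* Natural deduction at a fixed world w, given the (already defined)
   provability H w' at the worlds w' with w ≺ w'. Least relation. *)
Inductive nd_step (w : W) (H : W -> ctx Atom W -> prop Atom -> Prop)
  : ctx Atom W -> prop Atom -> Prop :=
| nd_hyp G A : In (A, w) G -> nd_step w H G A
| nd_botE G C : nd_step w H G Bot -> nd_step w H G C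
| nd_impI G A B : nd_step w H ((A, w) :: G) B -> nd_step w H G (Imp A B)
| nd_impE G A B : nd_step w H G (Imp A B) -> nd_step w H G A -> nd_step w H G B
| nd_diaI G A w' : R w w' -> H w' G A -> nd_step w H G (Dia A)
| nd_boxI G A : (forall w', R w w' -> H w' G A) -> nd_step w H G (Box A)
| nd_diaE G A C : nd_step w H G (Dia A) ->
    (forall w', R w w' -> H w' G A -> nd_step w H G C) -> nd_step w H G C
| nd_boxE G A C : nd_step w H G (Box A) ->
    ((forall w', R w w' -> H w' G A) -> nd_step w H G C) -> nd_step w H G C.

Inductive sq_step (w : W) (H : W -> ctx Atom W -> prop Atom -> Prop)
  : ctx Atom W -> prop Atom -> Prop :=
| sq_init G q : In (Atm q, w) G -> sq_step w H G (Atm q)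
| sq_botL G C : In (Bot, w) G -> sq_step w H G C
| sq_impR G A B : sq_step w H ((A, w) :: G) B -> sq_step w H G (Imp A B)
| sq_impL G A B C : In (Imp A B, w) G -> sq_step w H G A ->
    sq_step w H ((B, w) :: G) C -> sq_step w H G C
| sq_diaR G A w' : R w w' -> H w' G A -> sq_step w H G (Dia A)
| sq_boxR G A : (forall w', R w w' -> H w' G A) -> sq_step w H G (Box A)
| sq_diaL G A C : In (Dia A, w) G ->
    (forall w', R w w' -> H w' G A -> sq_step w H G C) -> sq_step w H G C
| sq_boxL G A C : In (Box A, w) G ->
    ((forall w', R w w' -> H w' G A) -> sq_step w H G C) -> sq_step w H G C.

(* World-by-world definition, by recursion on accessibility for the converse
   relation (i.e. provability at w defined after all worlds above w). *)
Fixpoint nd_acc (w : W) (a : Acc Rc w) {struct a} : ctx Atom W -> prop Atom -> Prop :=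
  match a with
  | Acc_intro _ f =>
      nd_step w (fun w' G A => exists h : R w w', nd_acc (f w' h) G A)
  end.

Fixpoint sq_acc (w : W) (a : Acc Rc w) {struct a} : ctx Atom W -> prop Atom -> Prop :=
  match a with
  | Acc_intro _ f =>
      sq_step w (fun w' G A => exists h : R w w', sq_acc (f w' h) G A)
  end.

Definition ND (G : ctx Atom W) (A : prop Atom) (w : W) : Prop :=
  exists a : Acc Rc w, nd_acc a G A.

Definition SEQ (G : ctx Atom W) (A : prop Atom) (w : W) : Prop :=
  exists a : Acc Rc w, sq_acc a G A.

Definition conv_wf : Prop :=
  ~ exists f : nat -> W, forall n, R (f n) (f (S n)).

End Calculi.

(* Sequent derivations are natural deductions in which every elimination acts
   on a hypothesis, so the direction from sequents to natural deduction is
   immediate.  Conversely, natural deduction at a world w is simulated by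
   sequents as soon as cut is admissible at w.  Cut is proved admissible at a
   single world by induction on the cut formula and on the derivation of its
   left premise: modal premises refer only to provability at later worlds,
   which is fixed, and the only genuine reduction is the implicational one.
   The argument needs that provability at a later world w' ignores hypotheses
   at w; this holds because a derivation at w' only consults hypotheses at
   worlds reachable from w', and w is not one of them since w' lies above w
   in a converse well-founded relation. *)

From Stdlib Require Import List Relations.

Lemma incl_cons_cons {T : Type} (a : T) (l m : list T) : incl l m -> incl (a :: l) (a :: m).
Proof. intros Hlm; apply incl_cons; [now left | apply incl_tl; assumption]. Qed.

Lemma incl_cons_swap {T : Type} (a b : T) (l m : list T) :
  incl l (a :: m) -> incl (b :: l) (a :: b :: m).
Proof.
  intros Hlm x [<- | Hx]; [right; now left|].
  destruct (Hlm x Hx) as [<- | Hx']; [now left | right; now right].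
Qed.

Definition ctx_agree_on {Atom W : Type} (P : W -> Prop) (G G' : ctx Atom W) : Prop :=
  forall X u, P u -> In (X, u) G <-> In (X, u) G'.

Section ContextAgreement.
Context {Atom W : Type}.
Implicit Types (P Q : W -> Prop) (A : prop Atom).

Lemma ctx_agree_on_refl P (G : ctx Atom W) : ctx_agree_on P G G.
Proof. intros X u Hu; reflexivity. Qed.

Lemma ctx_agree_on_sym P (G G' : ctx Atom W) : ctx_agree_on P G G' -> ctx_agree_on P G' G.
Proof. intros Hag X u Hu; symmetry; apply Hag; assumption. Qed.

Lemma ctx_agree_on_trans P (G G' G'' : ctx Atom W) :
  ctx_agree_on P G G' -> ctx_agree_on P G' G'' -> ctx_agree_on P G G''.
Proof. intros Hag Hag' X u Hu; rewrite (Hag X u Hu); apply Hag'; assumption. Qed.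

Lemma ctx_agree_on_weaken P Q (G G' : ctx Atom W) :
  (forall u, Q u -> P u) -> ctx_agree_on P G G' -> ctx_agree_on Q G G'.
Proof. intros HQP Hag X u Hu; apply Hag, HQP; assumption. Qed.

Lemma ctx_agree_on_cons P A u (G G' : ctx Atom W) :
  ctx_agree_on P G G' -> ctx_agree_on P ((A, u) :: G) ((A, u) :: G').
Proof. intros Hag X v Hv; simpl; rewrite (Hag X v Hv); reflexivity. Qed.

Lemma ctx_agree_on_cons_r P A u (G : ctx Atom W) :
  ~ P u -> ctx_agree_on P G ((A, u) :: G).
Proof.
  intros Hu X v Hv; split; [now right|].
  intros [[= -> ->] | HX]; [contradiction | assumption].
Qed.

End ContextAgreement.

Section OneWorld.
Variables (Atom W : Type) (R : W -> W -> Prop) (w : W)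
  (later : W -> ctx Atom W -> prop Atom -> Prop).

Notation sq := (sq_step R w later).
Notation off_w := (fun u : W => u <> w).

Definition later_stable (P : W -> Prop) : Prop :=
  forall w' G G' B, R w w' -> ctx_agree_on P G G' -> later w' G B -> later w' G' B.

Lemma sq_step_transport (P : W -> Prop) (G G' : ctx Atom W) C :
  later_stable P -> ctx_agree_on P G G' ->
  (forall X, In (X, w) G -> In (X, w) G') -> sq G C -> sq G' C.
Proof.
  intros Hst Hag Hw D; revert G' Hag Hw.
  induction D as [G q Hq | G C Hb | G A B D IH | G A B C Hi DA IHA DB IHB
                 | G A w' r Hl | G A Hl | G A C Hd K IH | G A C Hb K IH];
    intros G' Hag Hw.
  - apply sq_init; auto.
  - apply sq_botL; auto.
  - apply sq_impR, IH; [apply ctx_agree_on_cons; assumption|].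
    intros X [E | HX]; [now left | right; auto].
  - apply sq_impL with A B; auto.
    apply IHB; [apply ctx_agree_on_cons; assumption|].
    intros X [E | HX]; [now left | right; auto].
  - apply sq_diaR with w'; eauto.
  - apply sq_boxR; intros w' r; eauto.
  - apply sq_diaL with A; auto.
    intros w' r Hl; apply (IH w' r); auto.
    apply (Hst w' G'); auto using ctx_agree_on_sym.
  - apply sq_boxL with A; auto.
    intros Hl; apply IH; auto.
    intros w' r; apply (Hst w' G'); auto using ctx_agree_on_sym.
Qed.

Lemma sq_id (A : prop Atom) : forall G, In (A, w) G -> sq G A.
Proof.
  induction A as [q | | A IHA B IHB | A IHA | A IHA]; intros G Hin.
  - apply sq_init; assumption.
  - apply sq_botL; assumption.
  - apply sq_impR, sq_impL with A B; [now right | apply IHA | apply IHB]; now left.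
  - apply sq_diaL with A; [assumption|]. intros w' r Hl; apply sq_diaR with w'; assumption.
  - apply sq_boxL with A; [assumption|]. intros Hl; apply sq_boxR; assumption.
Qed.

Lemma sq_to_nd G A : sq G A -> nd_step R w later G A.
Proof.
  induction 1 as [G q Hq | G C Hb | G A B D IH | G A B C Hi DA IHA DB IHB
                 | G A w' r Hl | G A Hl | G A C Hd K IH | G A C Hb K IH].
  - apply nd_hyp; assumption.
  - apply nd_botE, nd_hyp; assumption.
  - apply nd_impI; assumption.
  - apply nd_impE with B; [apply nd_impI; assumption|].
    apply nd_impE with A; [apply nd_hyp|]; assumption.
  - apply nd_diaI with w'; assumption.
  - apply nd_boxI; assumption.
  - apply nd_diaE with A; [apply nd_hyp|]; assumption.
  - apply nd_boxE with A; [apply nd_hyp|]; assumption.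
Qed.

Hypothesis later_stable_off_w : later_stable off_w.

Lemma sq_weaken G G' C : incl G G' -> ctx_agree_on off_w G G' -> sq G C -> sq G' C.
Proof. intros Hinc Hag; apply sq_step_transport with off_w; auto. Qed.

Lemma sq_weaken_cons A G C : sq G C -> sq ((A, w) :: G) C.
Proof.
  apply sq_weaken; [apply incl_tl, incl_refl|].
  apply ctx_agree_on_cons_r; auto.
Qed.

(* The premises of the left rule for [A[w]] with conclusion [C]; [sq_init] and
   [sq_botL] count as the left rules of atoms and of [Bot]. *)
Definition left_premises (A : prop Atom) (G : ctx Atom W) (C : prop Atom) : Prop :=
  match A with
  | Atm q => C = Atm q
  | Bot => True
  | Imp X Y => sq G X /\ sq ((Y, w) :: G) C
  | Dia X => forall w', R w w' -> later w' G X -> sq G C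
  | Box X => (forall w', R w w' -> later w' G X) -> sq G C
  end.

Definition left_rule_admissible (A : prop Atom) (G : ctx Atom W) : Prop :=
  forall G' C, incl G G' -> ctx_agree_on off_w G G' -> left_premises A G' C -> sq G' C.

Lemma left_rule_admissible_cons A B G :
  left_rule_admissible A G -> left_rule_admissible A ((B, w) :: G).
Proof.
  intros Hadm G' C Hinc Hag; apply Hadm.
  - intros x Hx; apply Hinc; now right.
  - eapply ctx_agree_on_trans; [|exact Hag]; apply ctx_agree_on_cons_r; auto.
Qed.

Lemma ctx_agree_off_between A (G G2 : ctx Atom W) :
  incl G G2 -> incl G2 ((A, w) :: G) -> ctx_agree_on off_w G2 G.
Proof.
  intros Hinc Hinc2 Z u Hu; split; intros HZ; [|apply Hinc; assumption].
  destruct (Hinc2 _ HZ) as [[= -> ->] | HZ']; [contradiction | assumption].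
Qed.

(* [G ⊆ G2 ⊆ A[w] :: G] says that [G2] is [G] plus the hypothesis [A[w]], up to
   order and repetition; the sequent rules extend contexts at the head, so
   [A[w]] cannot be kept in front. *)
Lemma sq_discharge_gen A G2 C : sq G2 C ->
  forall G, left_rule_admissible A G -> incl G G2 -> incl G2 ((A, w) :: G) -> sq G C.
Proof.
  induction 1 as [G2 q Hq | G2 C Hb | G2 X Y D IH | G2 X Y C Hi DX IHX DY IHY
                 | G2 X w' r Hl | G2 X Hl | G2 X C Hd K IH | G2 X C Hb K IH];
    intros G Hadm Hinc Hinc2;
    pose proof (ctx_agree_off_between A G G2 Hinc Hinc2) as Hag;
    assert (HadmG : forall C, left_premises A G C -> sq G C)
      by (intros C0; apply Hadm; [apply incl_refl | apply ctx_agree_on_refl]).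
  - destruct (Hinc2 _ Hq) as [[= EA] | Hq'];
      [subst A; apply HadmG; reflexivity | apply sq_init; assumption].
  - destruct (Hinc2 _ Hb) as [[= EA] | Hb'];
      [subst A; apply HadmG; exact I | apply sq_botL; assumption].
  - apply sq_impR, IH; auto using left_rule_admissible_cons, incl_cons_cons, incl_cons_swap.
  - assert (DX' : sq G X) by auto.
    assert (DY' : sq ((Y, w) :: G) C)
      by (apply IHY; auto using left_rule_admissible_cons, incl_cons_cons, incl_cons_swap).
    destruct (Hinc2 _ Hi) as [[= EA] | Hi'];
      [subst A; apply HadmG; split; assumption | apply sq_impL with X Y; assumption].
  - apply sq_diaR with w'; [assumption|]; eapply later_stable_off_w; eauto.
  - apply sq_boxR; intros w' r; eapply later_stable_off_w; eauto.
  - assert (K' : forall w', R w w' -> later w' G X -> sq G C).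
    { intros w' r Hl; apply (IH w' r); auto.
      eapply later_stable_off_w; eauto using ctx_agree_on_sym. }
    destruct (Hinc2 _ Hd) as [[= EA] | Hd'];
      [subst A; exact (HadmG C K') | apply sq_diaL with X; assumption].
  - assert (K' : (forall w', R w w' -> later w' G X) -> sq G C).
    { intros Hl; apply IH; auto.
      intros w' r; eapply later_stable_off_w; eauto using ctx_agree_on_sym. }
    destruct (Hinc2 _ Hb) as [[= EA] | Hb'];
      [subst A; exact (HadmG C K') | apply sq_boxL with X; assumption].
Qed.

Lemma sq_discharge A G C : left_rule_admissible A G -> sq ((A, w) :: G) C -> sq G C.
Proof. intros Hadm D; apply (sq_discharge_gen A _ C D); auto using incl_tl, incl_refl. Qed.

Definition cut_admissible (A : prop Atom) : Prop :=
  forall G C, sq G A -> sq ((A, w) :: G) C -> sq G C.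

(* Only implication needs the cut formula's subformulas: the premises of the
   modal right rules live at later worlds and are used as they are. *)
Lemma sq_cut_step A :
  (forall X Y, A = Imp X Y -> cut_admissible X /\ cut_admissible Y) -> cut_admissible A.
Proof.
  intros IHA G C0 D; revert IHA C0.
  induction D as [G q Hq | G C Hb | G X Y D IH | G P Q C Hi DP IHP DQ IHQ
                 | G X w' r Hl | G X Hl | G X C Hd K IH | G X C Hb K IH];
    intros IHA C0 E.
  - apply (sq_discharge (Atm q)); [|assumption].
    intros G' C Hinc _ ->; apply sq_init; auto.
  - apply sq_botL; assumption.
  - destruct (IHA X Y eq_refl) as [cutX cutY].
    apply (sq_discharge (Imp X Y)); [|assumption].
    intros G' C Hinc Hag [DX DY]; apply (cutY G' C); [|assumption].
    apply (cutX G' Y); [assumption|].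
    apply (sq_weaken ((X, w) :: G)); auto using incl_cons_cons, ctx_agree_on_cons.
  - apply sq_impL with P Q; [assumption..|].
    apply IHQ; [assumption|].
    apply (sq_weaken ((C, w) :: G)); [apply incl_cons_cons, incl_tl, incl_refl| |exact E].
    apply ctx_agree_on_cons, ctx_agree_on_cons_r; auto.
  - apply (sq_discharge (Dia X)); [|assumption].
    intros G' C Hinc Hag K; apply (K w' r); eapply later_stable_off_w; eauto.
  - apply (sq_discharge (Box X)); [|assumption].
    intros G' C Hinc Hag K; apply K; intros w' r; eapply later_stable_off_w; eauto.
  - apply sq_diaL with X; [assumption|]; intros w' r Hl; apply (IH w' r); assumption.
  - apply sq_boxL with X; [assumption|]; intros Hl; apply IH; assumption.
Qed.

Lemma sq_cut A : cut_admissible A.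
Proof.
  induction A; apply sq_cut_step; intros X Y [= <- <-]; split; assumption.
Qed.

Lemma ctx_agree_off_w_cons A (G : ctx Atom W) : ctx_agree_on off_w ((A, w) :: G) G.
Proof. apply ctx_agree_on_sym, ctx_agree_on_cons_r; auto. Qed.

Lemma nd_to_sq G A : nd_step R w later G A -> sq G A.
Proof.
  induction 1 as [G A Hin | G C D IH | G A B D IH | G A B DI IHI DA IHA
                 | G A w' r Hl | G A Hl | G A C D IH K IHK | G A C D IH K IHK].
  - apply sq_id; assumption.
  - apply (sq_cut Bot); [assumption|]; apply sq_botL; now left.
  - apply sq_impR; assumption.
  - apply (sq_cut (Imp A B)); [assumption|].
    apply sq_impL with A B; [now left | apply sq_weaken_cons; assumption | apply sq_id; now left].
  - apply sq_diaR with w'; assumption.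
  - apply sq_boxR; assumption.
  - apply (sq_cut (Dia A)); [assumption|].
    apply sq_diaL with A; [now left|]; intros w' r Hl.
    apply sq_weaken_cons, (IHK w' r).
    eapply later_stable_off_w; eauto using ctx_agree_off_w_cons.
  - apply (sq_cut (Box A)); [assumption|].
    apply sq_boxL with A; [now left|]; intros Hl.
    apply sq_weaken_cons, IHK; intros w' r.
    eapply later_stable_off_w; eauto using ctx_agree_off_w_cons.
Qed.

End OneWorld.

Arguments later_stable {Atom W}.

Section Frames.
Variables (Atom W : Type) (R : W -> W -> Prop).

Lemma acc_Rc_not_cycle x : Acc (Rc R) x -> ~ clos_trans W R x x.
Proof.
  induction 1 as [x _ IH]; intros Hxx.
  apply clos_trans_t1n in Hxx; inversion Hxx as [? Rxx | y ? Rxy Hyx]; subst.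
  - apply (IH x Rxx), t_step, Rxx.
  - apply (IH y Rxy), t_trans with x; [apply clos_t1n_trans, Hyx | apply t_step, Rxy].
Qed.

Lemma sq_acc_local v (a : Acc (Rc R) v) (G G' : ctx Atom W) B :
  ctx_agree_on (clos_refl_trans W R v) G G' -> sq_acc a G B -> sq_acc a G' B.
Proof.
  revert G G' B; induction a as [v f IH] using Acc_inv_dep; intros G G' B Hag; simpl.
  apply sq_step_transport with (clos_refl_trans W R v); [|assumption|].
  - intros w' G1 G2 A r Hag12 [h D]; exists h; apply (IH w' h G1); [|assumption].
    apply ctx_agree_on_weaken with (clos_refl_trans W R v); [|assumption].
    intros u Hu; apply rt_trans with w'; [apply rt_step|]; assumption.
  - intros X HX; apply Hag; [apply rt_refl | assumption].
Qed.

Lemma nd_step_ext w (later later' : W -> ctx Atom W -> prop Atom -> Prop) G A :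
  (forall w' G A, later w' G A <-> later' w' G A) ->
  nd_step R w later G A -> nd_step R w later' G A.
Proof.
  intros Hext; induction 1 as [G A Hin | G C D IH | G A B D IH | G A B DI IHI DA IHA
                              | G A w' r Hl | G A Hl | G A C D IH K IHK | G A C D IH K IHK].
  - apply nd_hyp; assumption.
  - apply nd_botE; assumption.
  - apply nd_impI; assumption.
  - apply nd_impE with A; assumption.
  - apply nd_diaI with w'; [|apply Hext]; assumption.
  - apply nd_boxI; intros w' r; apply Hext; auto.
  - apply nd_diaE with A; [assumption|]; intros w' r Hl; apply (IHK w' r), Hext; assumption.
  - apply nd_boxE with A; [assumption|]; intros Hl; apply IHK; intros w' r; apply Hext; auto.
Qed.

Lemma nd_acc_iff_sq_acc w (a : Acc (Rc R) w) (G : ctx Atom W) A :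
  nd_acc a G A <-> sq_acc a G A.
Proof.
  revert G A; induction a as [w f IH] using Acc_inv_dep; intros G A; simpl.
  set (later := fun w' (G : ctx Atom W) A => exists h : R w w', sq_acc (f w' h) G A).
  assert (Hext : forall w' G A, (exists h : R w w', nd_acc (f w' h) G A) <-> later w' G A).
  { intros w' G0 A0; split; intros [h D]; exists h; apply (IH w' h); assumption. }
  assert (Hstable : later_stable R w later (fun u => u <> w)).
  { intros w' G1 G2 B r Hag [h D]; exists h; apply sq_acc_local with G1; [|assumption].
    intros X u Hu; apply Hag; intros ->.
    apply (acc_Rc_not_cycle _ (f w' h)), clos_rt_t with w; [assumption | apply t_step, r]. }
  split; intros D.
  - apply nd_to_sq; [assumption|]; apply nd_step_ext with (2 := D); assumption.
  - apply nd_step_ext with later; [intros; symmetry; apply Hext | apply sq_to_nd, D].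
Qed.

End Frames.

Theorem theorem3 (Atom W : Type) (R : W -> W -> Prop)
  (hwf : conv_wf R) (G : ctx Atom W) (A : prop Atom) (w : W) :
  ND R G A w <-> SEQ R G A w.
Proof.
  split; intros [a D]; exists a; apply nd_acc_iff_sq_acc; exact D.
Qed.
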